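(* Let $y(\tau_s)=(q_s,v_s,t_s)\in\mathbb{R}^{n_q}\times\mathbb{R}^{n_q}\times\mathbb{R}$ be given such that $f_c(q_s)=0$ and $n(q_s)^\top v_s\le 0$. Then the ordinary differential equation $$y'=f_{\mathrm{aux,n}}(y):=\begin{bmatrix}\mathbf{0}_{n_q,1}\\ M(q)^{-1}n(q)\,a_{\mathrm{n}}\\ 0\end{bmatrix},$$ with a constant $a_{\mathrm{n}}>0$, is an auxiliary dynamical system (in the sense defined in the context), with jump duration $$\tau_{\mathrm{jump}}=-\frac{n(q_s)^\top v_s}{D(q_s)\,a_{\mathrm{n}}}.$$
   Context: Let $f_c:\mathbb{R}^{n_q}\to\mathbb{R}$ and $M:\mathbb{R}^{n_q}\to\mathbb{R}^{n_q\times n_q}$ be at least twice continuously differentiable, with $M(q)$ symmetric positive definite for all $q$. Let $n(q):=\nabla_q f_c(q)$ and $D(q):=n(q)^\top M(q)^{-1}n(q)$. The state is $y=(q,v,t)\in\mathbb{R}^{n_q}\times\mathbb{R}^{n_q}\times\mathbb{R}$ ($q$ position, $v$ velocity, $t$ clock state / physical time), evolving in numerical time $\tau$, with $y'=\mathrm{d}y/\mathrm{d}\tau$. An auxiliary dynamical system $y'(\tau)=f_{\mathrm{aux,n}}(y(\tau))$ is one that satisfies, for every initial value $y(\tau_s)=(q_s,v_s,t_s)$ with $f_c(q_s)=0$ and $n(q_s)^\top v_s<0$, on a well-defined finite time interval $(\tau_s,\tau_r)$ of length $\tau_{\mathrm{jump}}=\tau_r-\tau_s$, the properties: (i) $f_c(q(\tau))\le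 0$ and $t'(\tau)=0$ for all $\tau\in(\tau_s,\tau_r)$; (ii) $n(q(\tau_r))^\top v(\tau_r)=0$; (iii) $f_c(q(\tau_r))=0$. *)

From HB Require Import structures.
From mathcomp Require Import all_boot all_order all_algebra.
From mathcomp Require Import all_classical all_reals all_analysis.
Set Implicit Arguments. Unset Strict Implicit. Unset Printing Implicit Defensive.
Import Order.TTheory GRing.Theory Num.Theory.
Import numFieldNormedType.Exports.
Local Open Scope ring_scope.
Local Open Scope classical_set_scope.

Section Defs.
Context {R : realType} {nq : nat}.

Definition ecv (i : 'I_nq) : 'cV[R]_nq := delta_mx i 0.

Definition partial (f : 'cV[R]_nq -> R) (i : 'I_nq) (q : 'cV[R]_nq) : R :=
  'D_(ecv i) f q.

(* twice continuously differentiable: all first and second partial derivatives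
   exist everywhere and the second ones are continuous
   (equivalent to C^2 in finite dimension) *)
Definition C2 (f : 'cV[R]_nq -> R) : Prop :=
  (forall i q, derivable f q (ecv i)) /\
  (forall i j q, derivable (partial f i) q (ecv j)) /\
  (forall i j, continuous (partial (partial f i) j)).

Definition grad (f : 'cV[R]_nq -> R) (q : 'cV[R]_nq) : 'cV[R]_nq :=
  \col_i partial f i q.

Definition Dq (fc : 'cV[R]_nq -> R) (M : 'cV[R]_nq -> 'M[R]_nq) (q : 'cV[R]_nq) : R :=
  ((grad fc q)^T *m invmx (M q) *m grad fc q) 0 0.

Definition sym_pos_def (A : 'M[R]_nq) : Prop :=
  A^T = A /\ forall x : 'cV[R]_nq, x != 0 -> 0 < (x^T *m A *m x) 0 0.

Definition state := ('cV[R]_nq * 'cV[R]_nq * R)%type.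

Definition f_aux_n (fc : 'cV[R]_nq -> R) (M : 'cV[R]_nq -> 'M[R]_nq) (an : R)
  (y : state) : state :=
  (0, an *: (invmx (M y.1.1) *m grad fc y.1.1), 0).

Definition ode_solution (f : state -> state) (y : R -> state) (ts tr : R) (y0 : state) : Prop :=
  y ts = y0 /\ {within `[ts, tr], continuous y} /\
  (forall tau, ts < tau < tr -> is_derive tau 1 y (f (y tau))).

Definition aux_props (fc : 'cV[R]_nq -> R) (y : R -> state) (ts tr : R) : Prop :=
  (forall tau, ts < tau < tr ->
     fc (y tau).1.1 <= 0 /\ derive1 (fun s => (y s).2) tau = 0) /\
  ((grad fc (y tr).1.1)^T *m (y tr).1.2) 0 0 = 0 /\
  fc (y tr).1.1 = 0.
End Defs.

From HB Require Import structures.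
From mathcomp Require Import all_boot all_order all_algebra.
From mathcomp Require Import all_classical all_reals all_analysis.
From mathcomp Require Import ring.
Import Order.TTheory GRing.Theory Num.Theory.
Import numFieldNormedType.Exports.
Local Open Scope ring_scope.
Local Open Scope classical_set_scope.

(* The field f_aux,n has no q-component, so along any solution q stays at q_s;
   the field is then the constant a_n M(q_s)^-1 n(q_s), and the solution is the
   straight line through (q_s, v_s, t_s) in that direction.  On it f_c stays 0,
   t stays t_s, and n(q_s)^T v grows linearly at rate a_n D(q_s) >= 0 from its
   nonpositive initial value, reaching 0 exactly at tau_s + tau_jump.  For
   vector-valued curves, "constant derivative implies affine" is obtained
   coordinatewise from the mean value theorem. *)

Section ConstantDerivative.
Context {R : realType}.
Implicit Types a b x : R.

Lemma is_derive_linear_comp (V W : normedModType R) (f : V -> W) (y : R -> V) x (l : V) :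
  continuous f -> {morph f : u w / u - w} -> scalable f ->
  is_derive x 1 y l -> is_derive x 1 (f \o y) (f l).
Proof.
move=> fC fB fZ [dy <-].
have Dfy : (fun h : R => h^-1 *: ((f \o y \o shift x) (h *: 1) - (f \o y) x)) @ 0^'
    --> f ('D_1 y x).
  have -> : (fun h : R => h^-1 *: ((f \o y \o shift x) (h *: 1) - (f \o y) x)) =
      f \o (fun h : R => h^-1 *: ((y \o shift x) (h *: 1) - y x)).
    by apply/funext => h /=; rewrite fZ fB.
  exact: cvg_comp dy (fC _).
apply: DeriveDef; [exact: cvgP Dfy | exact: cvg_lim Dfy].
Qed.

Lemma fst_continuous {U V : normedModType R} : continuous (@fst U V).
Proof. by move=> z; exact: cvg_fst. Qed.

Lemma snd_continuous {U V : normedModType R} : continuous (@snd U V).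
Proof. by move=> z; exact: cvg_snd. Qed.

Lemma is_derive_fst {U V : normedModType R} {y : R -> U * V} {x : R} {l : U * V} :
  is_derive x 1 y l -> is_derive x 1 (fst \o y) l.1.
Proof. exact: is_derive_linear_comp fst_continuous _ _. Qed.

Lemma is_derive_snd {U V : normedModType R} {y : R -> U * V} {x : R} {l : U * V} :
  is_derive x 1 y l -> is_derive x 1 (snd \o y) l.2.
Proof. exact: is_derive_linear_comp snd_continuous _ _. Qed.

Lemma is_derive_line (V : normedModType R) (p d : V) a x :
  is_derive x 1 (fun t => p + (t - a) *: d) d.
Proof.
apply: is_derive_eq.
  apply: is_deriveD.
  apply: (@is_derive_linear_comp _ _ (fun r : R => r *: d) (fun t => t - a)).
  - exact: scalel_continuous.
  - by move=> r s; exact: scalerBl.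
  - by move=> k r; rewrite /= scalerA.
by rewrite subr0 scale1r add0r.
Qed.

Lemma within_continuous_comp {A : set R} {V W : topologicalType} {f : V -> W} {y : R -> V} :
  continuous f -> {within A, continuous y} -> {within A, continuous (f \o y)}.
Proof.
by move=> fC yC x; exact: (@continuous_comp (subspace A) V W y f x (yC x) (fC _)).
Qed.

Lemma affine_of_const_derive {y : R -> R} {a b d : R} :
  {within `[a, b], continuous y} -> (forall x, a < x < b -> is_derive x 1 y d) ->
  forall x, a <= x <= b -> y x = y a + (x - a) * d.
Proof.
move=> yC yD x /andP[ax xb].
have [c _] : exists2 c, c \in `[a, x]%R & y x - y a = d * (x - a).
  apply: (MVT_segment (df := fun=> d)) ax _ _.
  - move=> z; rewrite in_itv /= => /andP[az zx]; apply: yD.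
    by rewrite az (lt_le_trans zx xb).
  - apply: continuous_subspaceW yC => z /=; rewrite !in_itv /= => /andP[-> zx].
    exact: le_trans zx xb.
by move/eqP; rewrite subr_eq addrC mulrC => /eqP.
Qed.

Lemma mx_affine_of_const_derive {m n} {y : R -> 'M[R]_(m, n)} {a b : R} {d : 'M[R]_(m, n)} :
  {within `[a, b], continuous y} -> (forall x, a < x < b -> is_derive x 1 y d) ->
  forall x, a <= x <= b -> y x = y a + (x - a) *: d.
Proof.
move=> yC yD x xab; apply/matrixP => i j; rewrite !mxE.
have coordC := @coord_continuous R m n i j.
apply: (@affine_of_const_derive (fun s => y s i j)) xab.
  exact: within_continuous_comp coordC yC.
move=> z /yD; apply: is_derive_linear_comp coordC _ _ => [u w | k u];
  by rewrite !mxE.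
Qed.

Lemma state_affine_of_const_derive {m1 n1 m2 n2}
    {y : R -> 'M[R]_(m1, n1) * 'M[R]_(m2, n2) * R} {a b : R} {d} :
  {within `[a, b], continuous y} -> (forall x, a < x < b -> is_derive x 1 y d) ->
  forall x, a <= x <= b -> y x = y a + (x - a) *: d.
Proof.
move=> yC yD x xab.
have y1C := within_continuous_comp fst_continuous yC.
have y1D z (zab : a < z < b) := is_derive_fst (yD z zab).
rewrite [y x]surjective_pairing [(y x).1]surjective_pairing /=.
congr (_, _, _).
- apply: (@mx_affine_of_const_derive _ _ (fst \o (fst \o y))) xab.
    exact: within_continuous_comp fst_continuous y1C.
  by move=> z /y1D /is_derive_fst.
- apply: (@mx_affine_of_const_derive _ _ (snd \o (fst \o y))) xab.
    exact: within_continuous_comp snd_continuous y1C.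
  by move=> z /y1D /is_derive_snd.
- apply: (@affine_of_const_derive (snd \o y)) xab.
    exact: within_continuous_comp snd_continuous yC.
  by move=> z /yD /is_derive_snd.
Qed.

End ConstantDerivative.

Section PositiveDefinite.
Context {R : realType} {n : nat}.

Lemma invmx_form_gt0 {A : 'M[R]_n} {x : 'cV[R]_n} :
  sym_pos_def A -> x != 0 -> 0 < (x^T *m invmx A *m x) 0 0.
Proof.
move=> [A_sym A_pos] x_neq0.
(* invmx leaves singular matrices unchanged. *)
have [A_unit | A_sing] := boolP (A \in unitmx); last by rewrite invmx_out ?inE ?A_pos.
set w := invmx A *m x.
have xE : x = A *m w by rewrite /w mulmxA mulmxV // mul1mx.
have w_neq0 : w != 0 by apply: contraNneq x_neq0 => w0; rewrite xE w0 mulmx0.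
by rewrite -mulmxA -/w {1}xE trmx_mul A_sym; exact: A_pos.
Qed.

Lemma invmx_form_ge0 {A : 'M[R]_n} (x : 'cV[R]_n) :
  sym_pos_def A -> 0 <= (x^T *m invmx A *m x) 0 0.
Proof.
move=> A_spd; have [-> | x_neq0] := eqVneq x 0; first by rewrite mulmx0 mxE.
exact/ltW/invmx_form_gt0.
Qed.

Lemma normal_velocity_after_jump (A : 'M[R]_n) (x v : 'cV[R]_n) (k : R) :
  sym_pos_def A -> k != 0 ->
  let tau_jump := - (x^T *m v) 0 0 / ((x^T *m invmx A *m x) 0 0 * k) in
  (x^T *m (v + tau_jump *: (k *: (invmx A *m x)))) 0 0 = 0.
Proof.
move=> A_spd k_neq0 tau_jump.
have [-> | x_neq0] := eqVneq x 0; first by rewrite trmx0 mul0mx mxE.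
have D_gt0 := invmx_form_gt0 A_spd x_neq0.
rewrite /tau_jump mulmxDr -!scalemxAr mulmxA.
clear tau_jump; move: (x^T *m v) (x^T *m invmx A *m x) D_gt0 => c D D_gt0.
by rewrite !mxE; field; rewrite k_neq0 gt_eqF.
Qed.

End PositiveDefinite.

Lemma f_aux_n_eq {R : realType} {nq : nat} {fc : 'cV[R]_nq -> R} {M : 'cV[R]_nq -> 'M[R]_nq}
    {an : R} {y z : @state R nq} :
  y.1.1 = z.1.1 -> f_aux_n fc M an y = f_aux_n fc M an z.
Proof. by rewrite /f_aux_n => ->. Qed.

Section AuxiliaryLine.
Context {R : realType} {nq : nat}.
Variables (fc : 'cV[R]_nq -> R) (M : 'cV[R]_nq -> 'M[R]_nq) (an : R).
Local Notation f := (f_aux_n fc M an).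

Definition aux_line (tau_s : R) (y0 : state) (tau : R) : state :=
  y0 + (tau - tau_s) *: f y0.

Lemma aux_line_q tau_s y0 tau : (aux_line tau_s y0 tau).1.1 = y0.1.1.
Proof. by rewrite /= scaler0 addr0. Qed.

Lemma aux_line_v tau_s y0 tau :
  (aux_line tau_s y0 tau).1.2 =
    y0.1.2 + (tau - tau_s) *: (an *: (invmx (M y0.1.1) *m grad fc y0.1.1)).
Proof. by []. Qed.

Lemma aux_line_solution tau_s tau_r y0 :
  ode_solution f (aux_line tau_s y0) tau_s tau_r y0.
Proof.
have lineD (tau : R) : is_derive tau 1 (aux_line tau_s y0) (f (aux_line tau_s y0 tau)).
  by rewrite (f_aux_n_eq (aux_line_q _ _ _)); exact: is_derive_line.
split; first by rewrite /aux_line subrr scale0r addr0.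
split; last by move=> tau _; exact: lineD.
apply: derivable_within_continuous => tau _.
by have [] := lineD tau.
Qed.

End AuxiliaryLine.

Section AuxiliarySolution.
Context {R : realType} {nq : nat}.
Context {fc : 'cV[R]_nq -> R} {M : 'cV[R]_nq -> 'M[R]_nq} {an : R}.
Local Notation f := (f_aux_n fc M an).
Context {y : R -> @state R nq} {tau_s tau_r : R} {y0 : @state R nq}.
Hypothesis y_sol : ode_solution f y tau_s tau_r y0.

Lemma aux_solution_q_const tau : tau_s <= tau <= tau_r -> (y tau).1.1 = y0.1.1.
Proof.
have [y_s [yC yD]] := y_sol.
have qC : {within `[tau_s, tau_r], continuous (fst \o (fst \o y))}.
  exact/(within_continuous_comp fst_continuous)/(within_continuous_comp fst_continuous).
have qD x : tau_s < x < tau_r -> is_derive x 1 (fst \o (fst \o y)) 0.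
  by move=> /yD /is_derive_fst /is_derive_fst.
by move=> /(mx_affine_of_const_derive qC qD) /= ->; rewrite y_s scaler0 addr0.
Qed.

Lemma aux_solution_eq_line tau :
  tau_s <= tau <= tau_r -> y tau = aux_line fc M an tau_s y0 tau.
Proof.
have [y_s [yC yD]] := y_sol.
have lineD x : tau_s < x < tau_r -> is_derive x 1 y (f y0).
  move=> /[dup] /andP[sx xr] /yD.
  by rewrite (f_aux_n_eq (@aux_solution_q_const x _)) // !ltW.
by move=> /(state_affine_of_const_derive yC lineD) ->; rewrite y_s.
Qed.

End AuxiliarySolution.

Theorem proposition1 (R : realType) (nq : nat)
  (fc : 'cV[R]_nq -> R) (M : 'cV[R]_nq -> 'M[R]_nq) (an : R)
  (tau_s : R) (qs vs : 'cV[R]_nq) (ts : R) :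
  C2 fc ->
  (forall i j, C2 (fun q => M q i j)) ->
  (forall q, sym_pos_def (M q)) ->
  0 < an ->
  fc qs = 0 ->
  ((grad fc qs)^T *m vs) 0 0 <= 0 ->
  let tau_jump := - ((grad fc qs)^T *m vs) 0 0 / (Dq fc M qs * an) in
  0 <= tau_jump /\
  (exists y : R -> state, ode_solution (f_aux_n fc M an) y tau_s (tau_s + tau_jump) (qs, vs, ts)) /\
  (forall y : R -> state,
     ode_solution (f_aux_n fc M an) y tau_s (tau_s + tau_jump) (qs, vs, ts) ->
     aux_props fc y tau_s (tau_s + tau_jump)).
Proof.
(* No smoothness is needed: the field is only ever evaluated at q = q_s. *)
move=> _ _ M_spd an_gt0 fc_qs vn_le0 tau_jump.
have D_ge0 : 0 <= Dq fc M qs := invmx_form_ge0 _ (M_spd qs).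
have tau_jump_ge0 : 0 <= tau_jump by rewrite divr_ge0 ?oppr_ge0 // mulr_ge0 // ltW.
split=> //; split.
  by exists (aux_line fc M an tau_s (qs, vs, ts)); exact: aux_line_solution.
move=> y y_sol; set tau_r := tau_s + tau_jump.
have [_ [_ yD]] := y_sol.
have tau_r_in : tau_s <= tau_r <= tau_r by rewrite lexx andbT lerDl.
split; [move=> tau tau_in; split | split].
- rewrite (aux_solution_q_const y_sol) ?fc_qs //.
  by case/andP: tau_in => *; rewrite !ltW.
- by rewrite derive1E; case: (is_derive_snd (yD _ tau_in)).
- rewrite (aux_solution_eq_line y_sol) // aux_line_q aux_line_v /tau_r [tau_s + _]addrC addrK.
  exact: normal_velocity_after_jump (M_spd qs) (lt0r_neq0 an_gt0).
- by rewrite (aux_solution_q_const y_sol).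
Qed.
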